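(* Let $W\in\mathbb{R}^{m\times n}$, $x_1,x_2\in\mathbb{R}^n$, $\ell(t)=(1-t)x_1+tx_2$, and let $0=t_1\le t_2\le\dots\le t_{n_t}=1$. Writing $x_{t_k}=\ell(t_k)$, we have $$\sum_{k=1}^{n_t-1}\|\operatorname{ReLU}(Wx_{t_k})-\operatorname{ReLU}(Wx_{t_{k+1}})\|_2^2\le\|\operatorname{ReLU}(Wx_1)-\operatorname{ReLU}(Wx_2)\|_2^2$$ and $$\sum_{k=1}^{n_t-1}\|\operatorname{ReLU}(Wx_{t_k})-\operatorname{ReLU}(Wx_{t_{k+1}})\|_2\le\sqrt{n_t}\,\|\operatorname{ReLU}(Wx_1)-\operatorname{ReLU}(Wx_2)\|_2.$$
   Context: $\operatorname{ReLU}(y)=\max(y,0)$ applied componentwise. *)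

From mathcomp Require Import all_boot all_order all_algebra.
Set Implicit Arguments. Unset Strict Implicit. Unset Printing Implicit Defensive.
Import Order.TTheory GRing.Theory Num.Theory.
Local Open Scope ring_scope.

Definition relu (R : realDomainType) (m n : nat) (A : 'M[R]_(m, n)) : 'M[R]_(m, n) :=
  map_mx (fun y => Num.max y 0) A.

Definition sqnorm2 (R : realDomainType) (m : nat) (v : 'cV[R]_m) : R :=
  \sum_(i < m) (v i 0) ^+ 2.

Definition norm2 (R : rcfType) (m : nat) (v : 'cV[R]_m) : R :=
  Num.sqrt (sqnorm2 v).

Definition segline (R : pzRingType) (n : nat) (x1 x2 : 'cV[R]_n) (t : R) : 'cV[R]_n :=
  (1 - t) *: x1 + t *: x2.

(* Along the segment, each coordinate of ReLU(W l(t)) is the ReLU of an affine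
   function of t, hence monotone in t; as the t_k increase, every coordinate
   sequence k |-> ReLU(W x_{t_k})_i is monotone, so its increments all have the
   same sign and the sum of their squares is at most the square of their sum,
   the total increment. Summing over the coordinates gives the first bound.
   The second follows from the first by Cauchy-Schwarz,
   \sum_(k < N) sqrt s_k <= sqrt (N \sum_k s_k), with N = n_t - 1 <= n_t. *)

From mathcomp Require Import all_boot all_order all_algebra.
From mathcomp Require Import ring lra zify.

Set Implicit Arguments.
Unset Strict Implicit.
Unset Printing Implicit Defensive.
Import Order.TTheory GRing.Theory Num.Theory.
Local Open Scope ring_scope.

Lemma sumr_sqr_le_sqr_sumr (R : realDomainType) (I : eqType) (r : seq I) (d : I -> R) :
  {in r, forall i, 0 <= d i} -> \sum_(i <- r) d i ^+ 2 <= (\sum_(i <- r) d i) ^+ 2.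
Proof.
elim: r => [|i r IHr] d_ge0; first by rewrite !big_nil expr0n.
have di_ge0 : 0 <= d i by apply: d_ge0; rewrite mem_head.
have dr_ge0 : {in r, forall j, 0 <= d j}.
  by move=> j rj; apply: d_ge0; rewrite in_cons rj orbT.
have sum_ge0 : 0 <= \sum_(j <- r) d j by rewrite big_seq sumr_ge0.
have := IHr dr_ge0.
rewrite !big_cons sqrrD; have := mulr_ge0 di_ge0 sum_ge0; lra.
Qed.

Lemma sqr_sumr_le_card_sumr_sqr (R : realDomainType) (I : finType) (a : I -> R) :
  (\sum_i a i) ^+ 2 <= #|I|%:R * \sum_i a i ^+ 2.
Proof.
set S := \sum_i a i; set Q := \sum_i a i ^+ 2.
have double_sum : \sum_i \sum_j (a i - a j) ^+ 2 = (#|I|%:R * Q - S ^+ 2) *+ 2.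
  have diag_l : \sum_i \sum_(j : I) a i ^+ 2 = #|I|%:R * Q.
    by rewrite mulr_sumr; apply: eq_bigr => i _; rewrite sumr_const mulr_natl.
  have diag_r : \sum_(i : I) \sum_j a j ^+ 2 = #|I|%:R * Q.
    by rewrite sumr_const mulr_natl.
  have cross : \sum_i \sum_j a i * a j = S ^+ 2.
    by rewrite expr2 mulr_suml; apply: eq_bigr => i _; rewrite mulr_sumr.
  have -> : (#|I|%:R * Q - S ^+ 2) *+ 2 =
      \sum_i \sum_(j : I) a i ^+ 2 + \sum_(i : I) \sum_j a j ^+ 2
      - (\sum_i \sum_j a i * a j) *+ 2 by rewrite diag_l diag_r cross; ring.
  rewrite -big_split -sumrMnl -sumrB /=; apply: eq_bigr => i _.
  rewrite -big_split -sumrMnl -sumrB /=; apply: eq_bigr => j _; ring.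
have : 0 <= \sum_i \sum_j (a i - a j) ^+ 2.
  by apply: sumr_ge0 => i _; apply: sumr_ge0 => j _; exact: sqr_ge0.
by rewrite double_sum pmulrn_lge0 // subr_ge0.
Qed.

Lemma sumr_sqrt_le_sqrt_card_sumr (R : rcfType) (I : finType) (s : I -> R) :
  (forall i, 0 <= s i) ->
  \sum_i Num.sqrt (s i) <= Num.sqrt (#|I|%:R * \sum_i s i).
Proof.
move=> s_ge0.
have sum_ge0 : 0 <= \sum_i Num.sqrt (s i) by apply: sumr_ge0 => i _; exact: sqrtr_ge0.
rewrite -(ger0_norm sum_ge0) -sqrtr_sqr ler_sqrt; last first.
  by apply: mulr_ge0; [exact: ler0n | exact: sumr_ge0].
under [X in _ <= _ * X]eq_bigr => i _ do rewrite -[s i]sqr_sqrtr //.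
exact: sqr_sumr_le_card_sumr_sqr.
Qed.

Definition monotone_upto (R : numDomainType) (N : nat) (g : nat -> R) : Prop :=
  (forall k, (k < N)%N -> g k <= g k.+1) \/ (forall k, (k < N)%N -> g k.+1 <= g k).

Lemma sumr_sqr_steps_le (R : realDomainType) (N : nat) (g : nat -> R) :
  monotone_upto N g -> \sum_(0 <= k < N) (g k - g k.+1) ^+ 2 <= (g 0%N - g N) ^+ 2.
Proof.
wlog g_homo : g / forall k, (k < N)%N -> g k <= g k.+1.
  move=> nondecr [g_homo | g_anti]; first by apply: nondecr => //; left.
  have opp_homo k : (k < N)%N -> - g k <= - g k.+1 by move/g_anti; rewrite lerN2.
  have := nondecr _ opp_homo (or_introl opp_homo).
  by under eq_bigr do rewrite -opprD sqrrN; rewrite -opprD sqrrN.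
move=> _.
rewrite -sqrrN opprB -telescope_sumr //.
under eq_bigr => k _ do rewrite -sqrrN opprB.
apply: sumr_sqr_le_sqr_sumr => k; rewrite mem_index_iota subr_ge0 => /andP[_].
exact: g_homo.
Qed.

Lemma monotone_upto_comp (R : numDomainType) (f : R -> R) (t : nat -> R) (N : nat) :
  {homo f : x y / x <= y} \/ {homo f : x y /~ x <= y} ->
  (forall k, (k < N)%N -> t k <= t k.+1) -> monotone_upto N (f \o t).
Proof.
by case=> f_mono t_homo; [left | right] => k /t_homo /f_mono.
Qed.

Lemma relu_lerp_monotone (R : realDomainType) (a b : R) :
  let f s := Num.max ((1 - s) * a + s * b) 0 in
  {homo f : x y / x <= y} \/ {homo f : x y /~ x <= y}.
Proof.
have lerp_step s s' : (1 - s') * a + s' * b - ((1 - s) * a + s * b) = (s' - s) * (b - a).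
  by ring.
have [ab | ba] := lerP a b; [left | right] => s s' ss'; apply: le_max2 => //;
  rewrite -subr_ge0 ?lerp_step.
- by apply: mulr_ge0; rewrite subr_ge0.
- by apply: mulr_le0; rewrite subr_le0 // ltW.
Qed.

Lemma sqnorm2_ge0 (R : realDomainType) (m : nat) (v : 'cV[R]_m) : 0 <= sqnorm2 v.
Proof. by apply: sumr_ge0 => i _; exact: sqr_ge0. Qed.

Lemma segline0 (R : pzRingType) (n : nat) (x1 x2 : 'cV[R]_n) : segline x1 x2 0 = x1.
Proof. by rewrite /segline subr0 scale1r scale0r addr0. Qed.

Lemma segline1 (R : pzRingType) (n : nat) (x1 x2 : 'cV[R]_n) : segline x1 x2 1 = x2.
Proof. by rewrite /segline subrr scale0r scale1r add0r. Qed.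

Lemma mulmx_segline (R : comPzRingType) (m n : nat) (W : 'M[R]_(m, n)) (x1 x2 : 'cV[R]_n) s :
  W *m segline x1 x2 s = segline (W *m x1) (W *m x2) s.
Proof. by rewrite /segline mulmxDr !scalemxAr. Qed.

Lemma sum_sqnorm2_relu_segline_le (R : realDomainType) (m : nat) (y1 y2 : 'cV[R]_m)
    (t : nat -> R) (N : nat) :
  (forall k, (k < N)%N -> t k <= t k.+1) ->
  \sum_(0 <= k < N) sqnorm2 (relu (segline y1 y2 (t k)) - relu (segline y1 y2 (t k.+1)))
    <= sqnorm2 (relu (segline y1 y2 (t 0%N)) - relu (segline y1 y2 (t N))).
Proof.
move=> t_homo; rewrite /sqnorm2 exchange_big /=; apply: ler_sum => i _.
have := sumr_sqr_steps_le (monotone_upto_comp (relu_lerp_monotone (y1 i 0) (y2 i 0)) t_homo).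
by under eq_bigr do rewrite !mxE; rewrite !mxE.
Qed.

(* The paper's t_1, ..., t_{n_t} are t 0, ..., t nt.-1. *)
Theorem lemma15 (R : rcfType) (m n : nat) (W : 'M[R]_(m, n))
  (x1 x2 : 'cV[R]_n) (nt : nat) (t : nat -> R) :
  (0 < nt)%N ->
  t 0%N = 0 -> t nt.-1 = 1 ->
  (forall k : nat, (k.+1 < nt)%N -> t k <= t k.+1) ->
  \sum_(0 <= k < nt.-1)
     sqnorm2 (relu (W *m segline x1 x2 (t k)) - relu (W *m segline x1 x2 (t k.+1)))
    <= sqnorm2 (relu (W *m x1) - relu (W *m x2))
  /\
  \sum_(0 <= k < nt.-1)
     norm2 (relu (W *m segline x1 x2 (t k)) - relu (W *m segline x1 x2 (t k.+1)))
    <= Num.sqrt (nt%:R) * norm2 (relu (W *m x1) - relu (W *m x2)).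
Proof.
move=> nt_gt0 t0 t1 t_homo.
have t_homo' k : (k < nt.-1)%N -> t k <= t k.+1 by move=> k_lt; apply: t_homo; lia.
have sq_bound := sum_sqnorm2_relu_segline_le (W *m x1) (W *m x2) t_homo'.
rewrite t0 t1 segline0 segline1 in sq_bound.
under eq_bigr do rewrite !mulmx_segline.
split=> //.
under eq_bigr do rewrite !mulmx_segline.
rewrite /norm2 big_mkord; rewrite big_mkord in sq_bound.
apply: le_trans (sumr_sqrt_le_sqrt_card_sumr (fun k : 'I_nt.-1 => sqnorm2_ge0 _)) _.
rewrite card_ord -sqrtrM ?ler0n // ler_sqrt; last by rewrite mulr_ge0 ?ler0n ?sqnorm2_ge0.
apply: ler_pM; rewrite ?ler0n ?sumr_ge0 //; first by move=> k _; exact: sqnorm2_ge0.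
by rewrite ler_nat; lia.
Qed.
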